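(* Let $\Omega$ be a convex domain in $\mathbb{R}^n$, let $\tau$ be a smooth symmetric $(0,2)$-tensor field on $\Omega$, and let $x_0\neq y_0$ be points of $\Omega$. Let $e_1,\dots,e_n$ be an orthonormal frame of $\mathbb{R}^n$ with $e_n=N(x_0,y_0)$, and let $E_i=(e_i,e_i)\in\mathbb{R}^n\times\mathbb{R}^n$ for $i=1,\dots,n$. Then $$\nabla_{E_i}\nabla_{E_i}E_{\tau}(x_0,y_0)=E_{\nabla_{e_i}\nabla_{e_i}\tau}(x_0,y_0)$$ for $i=1,2,\dots,n$.
   Context: For $x,y\in\mathbb{R}^n$ let $r(x,y)=\|x-y\|$, and for $x\neq y$ let $N(x,y)=\frac{y-x}{\|y-x\|}$ and $\theta(s,x,y)=x+sN(x,y)$. For a symmetric $(0,2)$-tensor field $\tau$ on $\Omega$, $E_\tau(x,y)=\int_0^{r(x,y)}\tau(\theta(s,x,y))(N(x,y),N(x,y))\,ds$, viewed as a function of $(x,y)\in\Omega\times\Omega$; $\nabla_{V}$ for $V\in\mathbb{R}^n\times\mathbb{R}^n$ denotes the directional derivative of a function of $(x,y)$ in direction $V$ (so $\nabla_V\nabla_V$ is the second directional derivative). $\nabla_{e_i}\nabla_{e_i}\tau$ is the second (Euclidean) covariant derivative of $\tau$ in direction $e_i$, a symmetric $(0,2)$-tensor field. *)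

From HB Require Import structures.
From mathcomp Require Import all_boot all_order all_algebra.
From mathcomp Require Import all_classical all_reals all_analysis.
Set Implicit Arguments. Unset Strict Implicit. Unset Printing Implicit Defensive.
Import Order.TTheory GRing.Theory Num.Theory.
Import numFieldNormedType.Exports.
Local Open Scope classical_set_scope.
Local Open Scope ring_scope.

Section Defs.
Variables (R : realType) (n : nat).
Notation V := 'rV[R]_n.

Definition edot (v w : V) : R := \sum_(i < n) v 0 i * w 0 i.
Definition enorm (v : V) : R := Num.sqrt (edot v v).

Definition rdist (x y : V) : R := enorm (y - x).
Definition Ndir (x y : V) : V := (enorm (y - x))^-1 *: (y - x).
Definition theta (s : R) (x y : V) : V := x + s *: Ndir x y.

(* A (0,2)-tensor field is represented by its matrix field p |-> tau p;
   tau(p)(v,w) = v * tau p * w^T. *)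
Definition tens_eval (A : 'M[R]_n) (v w : V) : R := (v *m A *m w^T) 0 0.

Definition symmetric_field (O : set V) (tau : V -> 'M[R]_n) : Prop :=
  forall p, O p -> (tau p)^T = tau p.

Definition iterD (W : normedModType R) (vs : seq V) (f : V -> W) : V -> W :=
  foldr (fun v g => 'D_v g) f vs.

Definition smooth_on (W : normedModType R) (O : set V) (f : V -> W) : Prop :=
  forall vs : seq V, forall x, O x -> differentiable (iterD vs f) x.

Definition Etau (tau : V -> 'M[R]_n) (xy : V * V) : R :=
  Rintegral lebesgue_measure `[0, rdist xy.1 xy.2]
    (fun s => tens_eval (tau (theta s xy.1 xy.2)) (Ndir xy.1 xy.2) (Ndir xy.1 xy.2)).

(* second (Euclidean) covariant derivative nabla_e nabla_e tau *)
Definition cov2 (tau : V -> 'M[R]_n) (e : V) : V -> 'M[R]_n :=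
  'D_e ('D_e tau).

End Defs.

(* Moving both endpoints by the same vector [t v] leaves [r(x, y)] and [N(x, y)]
   unchanged, so along the diagonal direction [(v, v)]
     [E_tau(x0 + t v, y0 + t v) = int_0^r tau(x0 + s N + t v)(N, N) ds].
   Differentiating twice in [t] under the integral sign gives the integral of
   [D_v D_v tau] along the segment.  Differentiation under the integral is
   justified by first-order Taylor estimates that are uniform in [s], thanks to
   a bound on the next derivative over a compact tube around the segment; the
   tube lies in [Omega] by openness at the endpoints and convexity. *)

From Pilot Require Import Defs.
From HB Require Import structures.
From mathcomp Require Import all_boot all_order all_algebra.
From mathcomp Require Import all_classical all_reals all_analysis.
From mathcomp Require Import ring lra.
Import Order.TTheory GRing.Theory Num.Theory.
Import numFieldNormedType.Exports.
Local Open Scope classical_set_scope.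
Local Open Scope ring_scope.

Section ParametricIntegral.
Context {R : realType}.
Local Notation mu := (@lebesgue_measure R).

Lemma ler_dist_derive_bound (f df : R -> R) (a b M : R) :
  (forall x, Num.min a b <= x <= Num.max a b ->
     is_derive x 1 f (df x) /\ `|df x| <= M) ->
  `|f b - f a| <= M * `|b - a|.
Proof.
wlog ab : a b / a <= b.
  move=> W H; case: (leP a b) => [ab|ba]; first exact: W.
  rewrite distrC (distrC b); apply: W; first exact: ltW.
  by move=> x; rewrite minC maxC; exact: H.
move=> H; rewrite (min_l ab) (max_r ab) in H.
have [c cab ->] : exists2 c, c \in `[a, b]%R & f b - f a = df c * (b - a).
  apply: MVT_segment => //.
  - by move=> x; rewrite in_itv /= => /andP[x1 x2]; apply: (H x _).1; rewrite !ltW.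
  - apply: continuous_in_subspaceT => x; rewrite inE /= in_itv /= => xab.
    have [fx _] := H x xab.
    by apply: differentiable_continuous; rewrite -derivable1_diffP.
rewrite normrM ler_wpM2r //.
by have [] := H c; move: cab; rewrite in_itv.
Qed.

Lemma normr_between_lt {a b x d : R} : `|a| < d -> `|b| < d ->
  Num.min a b <= x <= Num.max a b -> `|x| < d.
Proof.
rewrite !ltr_norml => /andP[a1 a2] /andP[b1 b2] /andP[x1 x2].
apply/andP; split; first by apply: lt_le_trans x1; rewrite lt_min a1 b1.
by apply: le_lt_trans x2 _; rewrite gt_max a2 b2.
Qed.

Lemma dist_between_le (t h x : R) : Num.min t (t + h) <= x <= Num.max t (t + h) ->
  `|x - t| <= `|h|.
Proof.
case: (leP 0 h) => h0.
  rewrite min_l ?max_r ?lerDl // => /andP[x1 x2].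
  by rewrite ger0_norm ?subr_ge0 // ger0_norm // lerBlDl.
have hh : t + h <= t by rewrite gerDl ltW.
rewrite min_r ?max_l // => /andP[x1 x2].
by rewrite ler0_norm ?subr_le0 // ltr0_norm // opprB lerBlDl addrC -lerBlDl opprK.
Qed.

Lemma taylor1_remainder_bound (H K K2 : R -> R) (t h M d : R) :
  (forall u : R, `|u| < d -> is_derive u 1 H (K u)) ->
  (forall u : R, `|u| < d -> is_derive u 1 K (K2 u) /\ `|K2 u| <= M) ->
  `|t| < d -> `|t + h| < d ->
  `|H (t + h) - H t - h * K t| <= M * (`|h| * `|h|).
Proof.
move=> dH dK td thd.
(* the remainder is the increment of [H u - K t * u], whose derivative
   [K u - K t] is [O(|h|)] on the segment *)
pose g u := H u - K t * u.
have -> : H (t + h) - H t - h * K t = g (t + h) - g t by rewrite /g; ring.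
have -> : `|h| * `|h| = `|h| * `|(t + h) - t| by rewrite addrAC subrr add0r.
rewrite mulrA; apply: (@ler_dist_derive_bound g (fun u => K u - K t)) => x xs.
have xd := normr_between_lt td thd xs.
split.
  rewrite /g; apply: is_deriveB; first exact: dH.
  by apply: is_derive_eq; exact: mulr1.
apply: le_trans (@ler_dist_derive_bound K K2 t x M _) _.
  by move=> y ys; apply: dK; exact: normr_between_lt td xd ys.
rewrite ler_wpM2l //; last exact: dist_between_le.
by have [_] := dK t td; apply: le_trans.
Qed.

Lemma continuous_segment_integrable {r : R} {f : R -> R} :
  {within `[0, r], continuous f} -> mu.-integrable `[0, r] (EFin \o f).
Proof. by move=> cf; apply: continuous_compact_integrable => //; exact: segment_compact. Qed.

Section Leibniz.
Variables (r d M : R) (H K K2 : R -> R -> R).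
Hypothesis dH : forall s u : R, 0 <= s <= r -> `|u| < d -> is_derive u 1 (H s) (K s u).
Hypothesis dK : forall s u : R, 0 <= s <= r -> `|u| < d ->
  is_derive u 1 (K s) (K2 s u) /\ `|K2 s u| <= M.
Hypothesis cH : forall u : R, `|u| < d -> {within `[0, r], continuous (fun s => H s u)}.
Hypothesis cK : forall u : R, `|u| < d -> {within `[0, r], continuous (fun s => K s u)}.

Let IH u := \int[mu]_(s in `[0, r]) H s u.
Let IK u := \int[mu]_(s in `[0, r]) K s u.

Lemma Rintegral_taylor1_remainder_bound {t h : R} : `|t| < d -> `|t + h| < d ->
  `|IH (t + h) - IH t - h * IK t| <= M * (`|h| * `|h|) * fine (mu `[0, r]).
Proof.
move=> td thd.
pose D s := H s (t + h) - H s t - h * K s t.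
have cHH : {within `[0, r], continuous (fun s => H s (t + h) - H s t)}.
  by move=> x; apply: (@continuousB _ _ (subspace _) (H^~ (t + h)) (H^~ t));
    [exact: cH | exact: cH].
have chK : {within `[0, r], continuous (fun s => h * K s t)}.
  by move=> x; apply: (@continuousM _ (subspace _) (cst h) (K^~ t));
    [exact: cvg_cst | exact: cK].
have cD : {within `[0, r], continuous D}.
  by move=> x; apply: (@continuousB _ _ (subspace _)
    (fun s => H s (t + h) - H s t) (fun s => h * K s t)); [exact: cHH | exact: chK].
have iD := continuous_segment_integrable cD.
have -> : IH (t + h) - IH t - h * IK t = \int[mu]_(s in `[0, r]) D s.
  have iHH := continuous_segment_integrable cHH.
  have ihK := continuous_segment_integrable chK.
  have iHt := continuous_segment_integrable (cH _ td).
  have iHth := continuous_segment_integrable (cH _ thd).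
  have iKt := continuous_segment_integrable (cK _ td).
  rewrite /D (@RintegralB _ _ _ mu _ (fun s => H s (t + h) - H s t)) //.
  by rewrite (@RintegralB _ _ _ mu _ (H^~ (t + h))) // RintegralZl.
apply: le_trans (le_normr_Rintegral _ iD) _ => //.
rewrite -Rintegral_cst //; apply: le_Rintegral => //.
- apply: continuous_segment_integrable => x.
  by apply: (continuous_comp (cD x)); exact: norm_continuous.
- by apply: continuous_segment_integrable => x; exact: cvg_cst.
move=> s; rewrite /= in_itv /= => s0r.
by apply: (@taylor1_remainder_bound (H s) (K s) (K2 s) t h M d) => // u;
  [exact: dH | exact: dK].
Qed.

Lemma is_derive_Rintegral (t : R) : 0 <= r -> `|t| < d -> is_derive t 1 IH (IK t).
Proof.
move=> r0 td.
pose C := fine (mu `[0, r]).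
have C0 : 0 <= C by rewrite /C fine_ge0 // measure_ge0.
have M0 : 0 <= M.
  by have [_] := dK 0 t (introT andP (conj (lexx 0) r0)) td; apply: le_trans.
have quot_near h : h != 0 -> `|t + h| < d ->
    `|IK t - h^-1 *: (IH (h *: 1 + t) - IH t)| <= M * C * `|h|.
  move=> h0 thd; rewrite -[h *: 1]/(h * 1) mulr1 (addrC h t).
  have -> : IK t - h^-1 *: (IH (t + h) - IH t) = - (h^-1 * (IH (t + h) - IH t - h * IK t)).
    by rewrite -[h^-1 *: _]/(h^-1 * _); field.
  rewrite normrN normrM normfV.
  have hn0 : 0 < `|h| by rewrite normr_gt0.
  rewrite ler_pdivrMl // (le_trans (Rintegral_taylor1_remainder_bound td thd)) //.
  by rewrite -/C le_eqVlt; apply/orP; left; apply/eqP; ring.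
have Q : (fun h : R => h^-1 *: (IH (h *: 1 + t) - IH t)) @ 0^' --> IK t.
  apply/cvgrPdist_le => e e0.
  have d0 : 0 < d - `|t| by rewrite subr_gt0.
  have MC0 : 0 < M * C + 1 by rewrite ltr_wpDl ?mulr_ge0.
  have ee : 0 < e / (M * C + 1) by rewrite divr_gt0.
  near=> h.
  apply: le_trans (quot_near h _ _) _.
  - by near: h; exact: nbhs_dnbhs_neq.
  - near: h; apply: filterS (dnbhs0_lt d0) => h hd.
    by rewrite (le_lt_trans (ler_normD _ _)) // -ltrBrDl.
  - have : `|h| <= e / (M * C + 1) by near: h; exact: dnbhs0_le ee.
    rewrite ler_pdivlMr // => he; apply: le_trans he.
    by rewrite mulrC ler_wpM2l //; lra.
apply: DeriveDef; first by apply/cvg_ex; exists (IK t).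
exact: cvg_lim Q.
Unshelve. all: by end_near. Qed.

End Leibniz.
End ParametricIntegral.

Section TensorEval.
Context {R : realType} {n : nat}.
Local Notation V := 'rV[R]_n.

Lemma tens_evalE (A : 'M[R]_n) (a b : V) :
  tens_eval A a b = \sum_j (\sum_k a 0 k * A k j) * b 0 j.
Proof. by rewrite /tens_eval !mxE; apply: eq_bigr => j _; rewrite !mxE. Qed.

Lemma tens_evalZB (A B : 'M[R]_n) (h : R) (a b : V) :
  tens_eval (h *: (A - B)) a b = h * (tens_eval A a b - tens_eval B a b).
Proof. by rewrite /tens_eval -scalemxAr -scalemxAl mulmxBr mulmxBl !mxE. Qed.

Lemma cvg_tens_eval {T} (F : set_system T) {FF : Filter F} (f : T -> 'M[R]_n)
    (A : 'M[R]_n) (a b : V) :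
  f @ F --> A -> (fun x => tens_eval (f x) a b) @ F --> tens_eval A a b.
Proof.
move=> fA; rewrite tens_evalE; under eq_fun do rewrite tens_evalE.
apply: (@cvg_big _ _ +%R 0 xpredT add_continuous) => j _.
apply: cvgM; last exact: cvg_cst.
apply: (@cvg_big _ _ +%R 0 xpredT add_continuous) => k _.
apply: cvgM; first exact: cvg_cst.
by apply: (cvg_comp f (fun M : 'M[R]_n => M k j) fA); exact: coord_continuous.
Qed.

Lemma is_derive_tens_eval (M : V -> 'M[R]_n) (q w a b : V) : derivable M q w ->
  is_derive q w (fun p => tens_eval (M p) a b) (tens_eval ('D_w M q) a b).
Proof.
move=> dM.
have quotE : (fun h : R => h^-1 *: (((fun p => tens_eval (M p) a b) \o shift q) (h *: w)
                 - tens_eval (M q) a b))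
           = (fun h => tens_eval (h^-1 *: ((M \o shift q) (h *: w) - M q)) a b).
  by apply/funext => h; rewrite tens_evalZB.
have C : (fun h : R => h^-1 *: (((fun p => tens_eval (M p) a b) \o shift q) (h *: w)
             - tens_eval (M q) a b)) @ 0^' --> tens_eval ('D_w M q) a b.
  by rewrite quotE; apply: cvg_tens_eval; exact: dM.
apply: DeriveDef; first by apply/cvg_ex; eexists; exact: C.
exact: cvg_lim C.
Qed.

Lemma is_derive_line (G : V -> R) (p w : V) (t g : R) :
  is_derive (p + t *: w) w G g -> is_derive t 1 (fun u => G (p + u *: w)) g.
Proof.
move=> [dG vG].
have quotE : (fun h : R => h^-1 *: (((fun u => G (p + u *: w)) \o shift t) (h *: 1)
                 - G (p + t *: w)))
           = (fun h => h^-1 *: ((G \o shift (p + t *: w)) (h *: w) - G (p + t *: w))).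
  apply/funext => h /=; congr (_ *: (G _ - _)).
  by rewrite -[h *: 1]/(h * 1) mulr1 scalerDl addrCA addrA.
by apply: DeriveDef; rewrite /derivable /derive quotE // -vG.
Qed.

End TensorEval.

Section DiagonalTranslation.
Context {R : realType} {n : nat}.
Local Notation V := 'rV[R]_n.
Local Notation mu := (@lebesgue_measure R).

Variables (O : set V) (tau : V -> 'M[R]_n) (x0 y0 v : V).
Hypotheses (openO : open O) (convO : convex_set O) (smooth_tau : smooth_on O tau).
Hypotheses (Ox0 : O x0) (Oy0 : O y0) (x0_neq_y0 : x0 != y0).

Lemma rdist_gt0 {x y : V} : x != y -> 0 < rdist x y.
Proof.
move=> nxy; rewrite /rdist /enorm sqrtr_gt0 /edot lt_def.
rewrite sumr_ge0 ?andbT; last by move=> i _; rewrite -expr2 sqr_ge0.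
apply/negP => /eqP /psumr_eq0P sq0.
have : y - x = 0.
  apply/rowP => j; rewrite [RHS]mxE.
  have := sq0 (fun i _ => sqr_ge0 _) j isT.
  by rewrite -expr2 => /eqP; rewrite sqrf_eq0 => /eqP.
by move/eqP; rewrite subr_eq0 eq_sym (negbTE nxy).
Qed.

Let N := Ndir x0 y0.
Let r := rdist x0 y0.
Let c (s : R) : V := x0 + s *: N.
Let Hk (k : nat) (s t : R) : R := tens_eval (Defs.iterD (nseq k v) tau (c s + t *: v)) N N.
Let in_tube (d : R) := forall s t, 0 <= s <= r -> `|t| <= d -> O (c s + t *: v).

Lemma translated_segment_in (w : V) (s : R) :
  O (x0 + w) -> O (y0 + w) -> 0 <= s <= r -> O (c s + w).
Proof.
move=> Ox Oy /andP[s0 sr].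
have r0 : 0 < r := rdist_gt0 x0_neq_y0.
have p0 : 0 <= 1 - s / r by rewrite subr_ge0 ler_pdivrMr // mul1r.
have p1 : 1 - s / r <= 1 by rewrite gerBl divr_ge0 // ltW.
have := convO _ _ (Itv01 p0 p1) (mem_set Ox) (mem_set Oy); rewrite inE => Oz.
have -> : c s + w = (1 - s / r) *: (x0 + w) + (1 - (1 - s / r)) *: (y0 + w).
  have rn0 : r != 0 by rewrite gt_eqF.
  by apply/rowP => j; rewrite /c /N /Ndir -/(rdist x0 y0) -/r !mxE; field.
exact: Oz.
Qed.

Lemma exists_tube : exists2 d, 0 < d & in_tube d.
Proof.
have /nbhs_ballP [ex ex0 Bx] := openO _ Ox0.
have /nbhs_ballP [ey ey0 By] := openO _ Oy0.
set m := Num.min ex ey.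
have v1 : 0 < `|v| + 1 by rewrite ltr_wpDl.
exists (m / (`|v| + 1)); first by rewrite divr_gt0 // lt_min ex0 ey0.
move=> s t s0r tle.
have tv : `|t *: v| < m.
  rewrite normrZ; apply: le_lt_trans (ler_wpM2r (normr_ge0 _) tle) _.
  by rewrite mulrAC ltr_pdivrMr // ltr_pM2l ?lt_min ?ex0 ?ey0 // ltrDl.
apply: translated_segment_in s0r.
  apply: Bx; rewrite -ball_normE /= opprD addrA subrr sub0r normrN.
  by apply: lt_le_trans tv _; rewrite ge_min lexx.
apply: By; rewrite -ball_normE /= opprD addrA subrr sub0r normrN.
by apply: lt_le_trans tv _; rewrite ge_min lexx orbT.
Qed.

Lemma is_derive_Hk k s t : O (c s + t *: v) -> is_derive t 1 (Hk k s) (Hk k.+1 s t).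
Proof.
move=> Oq; have dif := smooth_tau (nseq k v) _ Oq.
have := is_derive_tens_eval _ _ _ N N (@diff_derivable _ _ _ _ _ v dif).
exact: (is_derive_line (fun p => tens_eval (Defs.iterD (nseq k v) tau p) N N) (c s) v t).
Qed.

Lemma continuous_Hk {X : topologicalType} k (S T : X -> R) (x : X) :
  {for x, continuous S} -> {for x, continuous T} -> O (c (S x) + T x *: v) ->
  {for x, continuous (fun y => Hk k (S y) (T y))}.
Proof.
move=> cS cT Oq.
apply: (@cvg_tens_eval _ _ _ _ _
  (fun y => Defs.iterD (nseq k v) tau (c (S y) + T y *: v))).
apply: (cvg_comp (fun y => c (S y) + T y *: v)); last first.
  by apply: differentiable_continuous; exact: smooth_tau.
apply: cvgD; last exact: cvgZr_tmp.
by apply: cvgD; [exact: cvg_cst | exact: cvgZr_tmp].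
Qed.

Lemma Hk_bounded k {d : R} : in_tube d ->
  exists M, forall s t, 0 <= s <= r -> `|t| <= d -> `|Hk k s t| <= M.
Proof.
move=> tube.
pose A : set (R * R) := `[0, r] `*` `[- d, d].
have cA : compact A by apply: compact_setX; exact: segment_compact.
have inA p : A p -> 0 <= p.1 <= r /\ `|p.2| <= d.
  by case: p => a b [/=]; rewrite !in_itv /= => ->; rewrite ler_norml.
have cf : {within A, continuous (fun p => Hk k p.1 p.2)}.
  apply: continuous_in_subspaceT => p; rewrite inE => /inA [p1 p2].
  by apply: continuous_Hk; [exact: cvg_fst | exact: cvg_snd | exact: tube].
have /compact_bounded [M0 [_ bnd]] := continuous_compact cf cA.
exists (M0 + 1) => s t s0 td.
apply: (bnd (M0 + 1) _ (Hk k s t)); first by rewrite ltrDl.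
by exists (s, t) => //; split; rewrite /= in_itv //= -ler_norml.
Qed.

Lemma Etau_diagonal_line (tau' : V -> 'M[R]_n) (u : R) :
  Etau tau' (u *: (v, v) + (x0, y0)) =
  \int[mu]_(s in `[0, r]) tens_eval (tau' (c s + u *: v)) N N.
Proof.
have sameE : (u *: v + y0) - (u *: v + x0) = y0 - x0.
  by rewrite opprD addrACA subrr add0r.
rewrite /Etau /= /rdist /theta /Ndir sameE -/(Ndir x0 y0) -/N -/(rdist x0 y0) -/r.
by apply: eq_Rintegral => s _; rewrite /c [in RHS]addrC addrA.
Qed.

Lemma is_derive_Rintegral_Hk k {d : R} : in_tube d -> forall t : R, `|t| < d ->
  is_derive t 1 (fun u => \int[mu]_(s in `[0, r]) Hk k s u)
                (\int[mu]_(s in `[0, r]) Hk k.+1 s t).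
Proof.
move=> tube t td.
have [M bM] := Hk_bounded k.+2 tube.
have r0 := ltW (rdist_gt0 x0_neq_y0).
have tube_lt s u : 0 <= s <= r -> `|u| < d -> O (c s + u *: v).
  by move=> s0r ud; apply: tube => //; exact: ltW.
apply: (@is_derive_Rintegral _ r d M (Hk k) (Hk k.+1) (Hk k.+2)) => //.
- by move=> s u s0r ud; apply: is_derive_Hk; exact: tube_lt.
- move=> s u s0r ud; split; first by apply: is_derive_Hk; exact: tube_lt.
  by apply: bM => //; exact: ltW.
- move=> u ud; apply: continuous_in_subspaceT => s; rewrite inE /= in_itv /= => s0r.
  by apply: (@continuous_Hk R k id (cst u));
    [exact: cvg_id | exact: cvg_cst | exact: tube_lt].
- move=> u ud; apply: continuous_in_subspaceT => s; rewrite inE /= in_itv /= => s0r.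
  by apply: (@continuous_Hk R k.+1 id (cst u));
    [exact: cvg_id | exact: cvg_cst | exact: tube_lt].
Qed.

Lemma derive_Etau_diagonal {d : R} : in_tube d -> forall u : R, `|u| < d ->
  'D_(v, v) (Etau tau) (u *: (v, v) + (x0, y0)) = \int[mu]_(s in `[0, r]) Hk 1 s u.
Proof.
move=> tube u ud.
rewrite -(@derive_val _ _ _ _ _ _ _ (is_derive_Rintegral_Hk 0 tube _ ud)) /derive.
congr lim; apply: (congr1 (fun f => fmap f _)); apply/funext => h /=.
rewrite -[h *: 1]/(h * 1) mulr1.
have -> : h *: (v, v) + (u *: (v, v) + (x0, y0)) = (h + u) *: (v, v) + (x0, y0).
  by rewrite scalerDl addrA.
by rewrite !Etau_diagonal_line.
Qed.

Lemma second_derive_Etau_diagonal :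
  derivable ('D_(v, v) (Etau tau)) (x0, y0) (v, v) /\
  'D_(v, v) ('D_(v, v) (Etau tau)) (x0, y0) = Etau (cov2 tau v) (x0, y0).
Proof.
have [d d0 tube] := exists_tube.
pose z : V * V := (x0, y0).
have z0 : z = 0 *: (v, v) + z by rewrite scale0r add0r.
have D1 := derive_Etau_diagonal tube.
have [dW vW] := is_derive_Rintegral_Hk 1 tube 0 ltac:(by rewrite normr0).
have Q : (fun h : R => h^-1 *: (('D_(v, v) (Etau tau) \o shift z) (h *: (v, v))
             - 'D_(v, v) (Etau tau) z))
    @ 0^' --> \int[mu]_(s in `[0, r]) Hk 2 s 0.
  rewrite -vW; apply: cvg_trans dW; apply: near_eq_cvg; near=> h => /=.
  have hd : `|h| < d by near: h; exact: dnbhs0_lt.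
  rewrite -[h *: 1]/(h * 1) mulr1 addr0 D1 // {1}z0.
  by rewrite D1 ?normr0.
rewrite -/z [in RHS]z0 Etau_diagonal_line.
by split; [apply/cvg_ex; eexists; exact: Q | exact: cvg_lim Q].
Unshelve. all: by end_near. Qed.

End DiagonalTranslation.

Theorem theorem2p4 (R : realType) (n : nat) (O : set 'rV[R]_n)
  (tau : 'rV[R]_n -> 'M[R]_n) (x0 y0 : 'rV[R]_n) (e : 'I_n -> 'rV[R]_n) :
  open O -> convex_set O ->
  smooth_on O tau -> symmetric_field O tau ->
  O x0 -> O y0 -> x0 != y0 ->
  (forall i j : 'I_n, edot (e i) (e j) = (i == j)%:R) ->
  (forall i : 'I_n, nat_of_ord i = n.-1 -> e i = Ndir x0 y0) ->
  forall i : 'I_n,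
    let Ei : 'rV[R]_n * 'rV[R]_n := (e i, e i) in
    derivable ('D_Ei (Etau tau)) (x0, y0) Ei /\
    'D_Ei ('D_Ei (Etau tau)) (x0, y0) = Etau (cov2 tau (e i)) (x0, y0).
Proof.
move=> openO convO smooth_tau _ Ox0 Oy0 x0_neq_y0 _ _ i Ei.
exact: (second_derive_Etau_diagonal O tau x0 y0 (e i)
  openO convO smooth_tau Ox0 Oy0 x0_neq_y0).
Qed.
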